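(* Let $m\geq k\geq 2$, let $I:\{1,\dots,m\}\to\{1,\dots,k\}$ assign each client $i$ to its data generating distribution $\varphi_{I(i)}$, and let $g_1,\dots,g_m\in\mathbb{R}^d$ be the nonzero empirical risk gradients $g_i=\nabla r_i(\theta^* )$ of the clients at a stationary point $\theta^*$ of the Federated Learning objective, with $\alpha_{i,j}=\alpha(g_i,g_j)$. Define $\alpha_{intra}^{min}:=\min_{i,j:\,I(i)=I(j)}\alpha_{i,j}$ and $\alpha_{cross}^{max}:=\min_{c_1\dot\cup c_2=\{1,\dots,m\}}\max_{i\in c_1,j\in c_2}\alpha_{i,j}$ (minimum over bi-partitions into nonempty sets). If $\alpha_{intra}^{min}>\alpha_{cross}^{max}$, then every bi-partitioning $$c_1,c_2\in\arg\min_{c_1\dot\cup c_2=\{1,\dots,m\}}\Big(\max_{i\in c_1,j\in c_2}\alpha_{i,j}\Big)$$ is correct, i.e. $I(i)\neq I(j)$ for all $i\in c_1$, $j\in c_2$.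
   Context: For nonzero $a,b\in\mathbb{R}^d$, $\alpha(a,b)=\frac{\langle a,b\rangle}{\|a\|\|b\|}$. A bi-partitioning of $\{1,\dots,m\}$ is a pair of disjoint nonempty sets $c_1,c_2$ whose union is $\{1,\dots,m\}$; it is called correct if $I(i)\neq I(j)$ for all $i\in c_1$, $j\in c_2$. Here $r_i$ is client $i$'s empirical risk and the Federated Learning objective is $F(\theta)=\sum_i \frac{|D_i|}{|D|}r_i(\theta)$. *)

From mathcomp Require Import all_boot all_order all_algebra.
From mathcomp Require Import reals constructive_ereal.
Set Implicit Arguments. Unset Strict Implicit. Unset Printing Implicit Defensive.
Import Order.TTheory GRing.Theory Num.Theory.
Local Open Scope ring_scope.

Definition dotv (R : realType) (d : nat) (a b : 'rV[R]_d) : R :=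
  \sum_(j < d) a 0 j * b 0 j.
Definition normv (R : realType) (d : nat) (a : 'rV[R]_d) : R :=
  Num.sqrt (dotv a a).

Definition cos_sim (R : realType) (d : nat) (a b : 'rV[R]_d) : R :=
  dotv a b / (normv a * normv b).

Definition is_bipartition (m : nat) (c1 c2 : {set 'I_m}) : bool :=
  [&& c1 != set0, c2 != set0, c1 :&: c2 == set0 & c1 :|: c2 == setT].

Definition cross_max (R : realType) (d m : nat) (g : 'I_m -> 'rV[R]_d)
  (c1 c2 : {set 'I_m}) : \bar R :=
  \big[maxe/-oo%E]_(i in c1) \big[maxe/-oo%E]_(j in c2) (cos_sim (g i) (g j))%:E.

Definition alpha_cross_max (R : realType) (d m : nat) (g : 'I_m -> 'rV[R]_d) : \bar R :=
  \big[mine/+oo%E]_(c : {set 'I_m} * {set 'I_m} | is_bipartition c.1 c.2)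
     cross_max g c.1 c.2.

Definition alpha_intra_min (R : realType) (d m k : nat) (I : 'I_m -> 'I_k)
  (g : 'I_m -> 'rV[R]_d) : \bar R :=
  \big[mine/+oo%E]_(p : 'I_m * 'I_m | I p.1 == I p.2) (cos_sim (g p.1) (g p.2))%:E.

Definition correct_bipartition (m k : nat) (I : 'I_m -> 'I_k) (c1 c2 : {set 'I_m}) : Prop :=
  forall i j, i \in c1 -> j \in c2 -> I i != I j.

(* If an optimal bi-partition separated [i in c1] from [j in c2] with
   [I i = I j], then
   [cross_max g c1 c2 >= alpha_{i,j} >= alpha_intra_min > alpha_cross_max],
   contradicting optimality. *)

From mathcomp Require Import all_boot all_order all_algebra.
From mathcomp Require Import reals constructive_ereal.
Import Order.TTheory GRing.Theory Num.Theory.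
Local Open Scope ring_scope.

Section CosineClustering.

Variables (R : realType) (d m k : nat) (I : 'I_m -> 'I_k) (g : 'I_m -> 'rV[R]_d).

Lemma cos_sim_le_cross_max (c1 c2 : {set 'I_m}) i j :
  i \in c1 -> j \in c2 -> ((cos_sim (g i) (g j))%:E <= cross_max g c1 c2)%E.
Proof.
move=> c1i c2j; apply: le_trans (le_bigmax_cond _ _ c1i).
exact: (le_bigmax_cond _ (fun j => (cos_sim (g i) (g j))%:E) c2j).
Qed.

Lemma alpha_intra_min_le_cos_sim {i j} :
  I i = I j -> (alpha_intra_min I g <= (cos_sim (g i) (g j))%:E)%E.
Proof.
move/eqP=> Iij.
exact: (bigmin_le_cond _ (fun p : 'I_m * 'I_m => (cos_sim (g p.1) (g p.2))%:E)
          (Iij : I (i, j).1 == I (i, j).2)).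
Qed.

Lemma argmin_cross_max_correct (c1 c2 : {set 'I_m}) :
  (alpha_cross_max g < alpha_intra_min I g)%E ->
  cross_max g c1 c2 = alpha_cross_max g ->
  correct_bipartition I c1 c2.
Proof.
move=> separated c_opt i j c1i c2j; apply/eqP => Iij.
have := lt_le_trans separated (alpha_intra_min_le_cos_sim Iij).
by rewrite -c_opt ltNge cos_sim_le_cross_max.
Qed.

End CosineClustering.

Theorem corollary1 (R : realType) (d m k : nat) (I : 'I_m -> 'I_k)
  (g : 'I_m -> 'rV[R]_d) (Dsize : 'I_m -> nat) :
  (2 <= k)%N -> (k <= m)%N ->
  (forall i, g i != 0) ->
    (forall i, (0 < Dsize i)%N) ->
  \sum_(i < m) ((Dsize i)%:R / (\sum_(j < m) Dsize j)%:R) *: g i = 0 ->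
  (alpha_cross_max g < alpha_intra_min I g)%E ->
  forall c1 c2 : {set 'I_m},
    is_bipartition c1 c2 ->
    cross_max g c1 c2 = alpha_cross_max g ->
    correct_bipartition I c1 c2.
Proof.
move=> _ _ _ _ _ separated c1 c2 _.
exact: argmin_cross_max_correct.
Qed.
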